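(* Let $\mathcal{F}\subseteq\mathcal{P}(\omega)$ be a free filter. Then $C_p(\xi(\mathcal{F}),2^\omega)$ is homeomorphic to $\mathcal{F}^\omega$ (with the product topology).
   Context: For a free filter $\mathcal{F}$ on $\omega$ (i.e., containing all cofinite sets), $\xi(\mathcal{F})$ is the space $\omega\cup\{\infty\}$ in which every point of $\omega$ is isolated and the neighborhoods of $\infty$ are the sets $\{\infty\}\cup A$ with $A\in\mathcal{F}$. For a space $X$, $C_p(X,2^\omega)$ is the set of continuous functions $X\to 2^\omega$ with the topology of pointwise convergence (subspace of $(2^\omega)^X$). $\mathcal{F}$ carries the subspace topology of the Cantor set $2^\omega\cong\mathcal{P}(\omega)$ (subsets identified with characteristic functions). *)

From HB Require Import structures.
From mathcomp Require Import all_boot all_order all_algebra.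
From mathcomp Require Import all_classical all_reals all_analysis.
Unset Printing Implicit Defensive.
Local Open Scope classical_set_scope.

(* Subsets of omega are identified with their characteristic functions,
   i.e. with points of the Cantor space 2^omega = cantor_space = nat -> bool. *)

Definition free_filter (F : set cantor_space) : Prop :=
  [/\ ~ F (fun _ => false),
      (forall A B : cantor_space, F A -> F B -> F (fun n => A n && B n)),
      (forall A B : cantor_space, F A -> (forall n, A n -> B n) -> F B) &
      (forall A : cantor_space, finite_set [set n | ~~ A n] -> F A)].

(* The space xi(F) = omega u {oo}; Some n is the point n, None is oo. *)
Definition xi (F : set cantor_space) : Type := option nat.

(* Subbase (in fact a base when F is a filter): singletons {n}, n in omega,
   and the sets {oo} u A with A in F. *)
Definition xi_subbase (F : set cantor_space) : set (set (xi F)) :=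
  [set U | (exists n : nat, U = [set Some n]) \/
           (exists A : cantor_space, F A /\
              U = [set x : xi F | match x with None => True | Some n => A n end])].

Section XiTopology.
Variable G : set cantor_space.
HB.instance Definition _ := Choice.on (xi G).
HB.instance Definition _ := isSubBaseTopological.Build (xi G) (xi_subbase G) id.
End XiTopology.

Definition Cp (F : set cantor_space) : set {ptws xi F -> cantor_space} :=
  [set f | continuous (f : xi F -> cantor_space)].

Definition Fomega (F : set cantor_space) : set {ptws nat -> cantor_space} :=
  [set s | forall n, F (s n)].

Definition homeomorphic {T U : topologicalType} (A : set T) (B : set U) : Prop :=
  exists (f : T -> U) (g : U -> T),
    [/\ (forall x, A x -> B (f x)), (forall y, B y -> A (g y)),
        (forall x, A x -> g (f x) = x), (forall y, B y -> f (g y) = y) &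
        ({within A, continuous f} /\ {within B, continuous g})].

(* A map g : xi(F) -> 2^omega is continuous iff for every bit k its agreement
   set {n | g(n)_k = g(oo)_k} belongs to F.  Record g by these agreement sets,
   i.e. by a sequence in F^omega; as F is free, the entry at position 0 of
   each set is irrelevant to membership in F and can instead store g(oo) and
   the agreements of g(0).  Every bit of the resulting bijection
   (2^omega)^xi(F) -> (2^omega)^omega and of its inverse depends on finitely
   many bits of the argument, so both are continuous, and they exchange
   C_p(xi(F), 2^omega) with F^omega. *)

From HB Require Import structures.
From mathcomp Require Import all_boot all_order all_algebra.
From mathcomp Require Import all_classical all_reals all_analysis.
From mathcomp Require Import finmap.
Local Open Scope classical_set_scope.

Lemma cvg_cantorP (G : set_system cantor_space) {FG : Filter G} (c : cantor_space) :
  G --> c <-> forall k, \forall d \near G, d k = c k.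
Proof.
rewrite pointwise_cvgP; split => Gc k; have := Gc k.
  by move/discrete_cvg.
by move=> ?; apply/discrete_cvg.
Qed.

Lemma near_ptws_bit {U : topologicalType} (f : {ptws U -> cantor_space}) u k :
  \forall g \near f, g u k = f u k.
Proof.
have /cvg_cantorP : (fun g => g u) @ f --> f u.
  by move: (@cvg_id _ (nbhs f)) => /pointwise_cvgP; apply.
exact.
Qed.

Lemma continuous_ptws_cantor (T U : topologicalType) (h : T -> {ptws U -> cantor_space}) :
  (forall x u k, \forall y \near x, h y u k = h x u k) -> continuous h.
Proof.
by move=> hc x; apply/pointwise_cvgP => u; apply/cvg_cantorP => k; exact: hc.
Qed.

Section free_filter.
Variable F : set cantor_space.
Hypothesis freeF : free_filter F.

Lemma free_filterT : F (fun _ => true).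
Proof.
case: freeF => _ _ _ cofinF; apply: cofinF.
by rewrite (_ : [set n | _] = set0) //; apply/seteqP; split.
Qed.

Lemma free_filter_finite_change {A B : cantor_space} :
  F A -> finite_set [set n | A n != B n] -> F B.
Proof.
case: freeF => _ FI FS cofinF FA finAB.
have FAB : F (fun n => A n && (A n == B n)) by apply: FI => //; exact: cofinF.
by apply: (FS _ _ FAB) => n /andP[An /eqP <-].
Qed.

Lemma open_xi_subbase (U : set (xi F)) : xi_subbase F U -> open U.
Proof.
move=> sU; exists [set U]; last first.
  by apply/seteqP; split => [x [_ -> //]|x Ux]; exists U.
move=> _ ->; exists [fset U]%fset; first by move=> _ /fset1P ->; exact/mem_set.
by apply/seteqP; split => [x|x Ux _ /fset1P ->//]; apply; rewrite /= inE.
Qed.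

Lemma nbhs_xi_Some n : nbhs (Some n : xi F) [set Some n].
Proof.
by apply: open_nbhs_nbhs; split => //; apply: open_xi_subbase; left; exists n.
Qed.

Lemma nbhs_xi_None (W : set (xi F)) : nbhs (None : xi F) W <->
  W None /\ exists2 A, F A & forall n, A n -> W (Some n).
Proof.
case: freeF => _ FI FS _.
pose G := [set W : set (xi F) | W None /\ exists2 A, F A & forall n, A n -> W (Some n)].
have filterG : Filter G.
  split; first by split => //; exists (fun _ => true) => //; exact: free_filterT.
    move=> P Q [PN [A FA AP]] [QN [B FB BQ]]; split => //.
    by exists (fun n => A n && B n); [exact: FI | move=> n /andP[/AP ? /BQ ?]].
  by move=> P Q PQ [PN [A FA AP]]; split; [exact: PQ | exists A => // n /AP /PQ].
split => [|[WN [A FA AW]]].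
  rewrite (@nbhsE (xi F)) => - [_ [[B sB <-] [C BC Ct] sUBA]].
  suff [CN [A FA AC]] : G C.
    by split; [apply: sUBA; exists C | exists A => // n /AC Cn; apply: sUBA; exists C].
  have /sB [D sD IDeC] := BC; rewrite -IDeC; apply: filter_bigI => E DE.
  case/set_mem: (sD E DE) => [[n En]|[A [FA ->]]]; last by split => //; exists A.
  by move: Ct; rewrite -IDeC => /(_ _ DE); rewrite En.
have AN_nbhs : nbhs (None : xi F) [set x | if x is Some n then A n else True].
  by apply: open_nbhs_nbhs; split => //; apply: open_xi_subbase; right; exists A.
by apply: (filterS _ AN_nbhs) => -[n /AW|].
Qed.

(* Instance resolution does not find [nbhs_pfilter] through the alias [xi F]. *)
Local Instance xi_nbhs_filter (x : xi F) : ProperFilter (nbhs x) := nbhs_pfilter x.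

Definition agree (g : xi F -> cantor_space) (k : nat) : cantor_space :=
  fun n => g (Some n) k == g None k.

Lemma continuous_xiP (g : xi F -> cantor_space) :
  continuous g <-> forall k, F (agree g k).
Proof.
case: freeF => _ _ FS _.
split => [gcont k | Fagree [n|]].
- have /cvg_cantorP/(_ k)/nbhs_xi_None[_ [A FA Aeq]] := gcont None.
  by apply: (FS _ _ FA) => n /Aeq /eqP.
- move=> W gW; apply: (filterS _ (nbhs_xi_Some n)) => _ ->; exact: nbhs_singleton.
apply/cvg_cantorP => k; apply/nbhs_xi_None; split => //.
by exists (agree g k) => // n /eqP.
Qed.

Definition code (f : {ptws xi F -> cantor_space}) : {ptws nat -> cantor_space} :=
  fun k n => if n is 0 then (if odd k then f None k./2 else agree f k./2 0)
             else agree f k n.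

Definition decode (s : {ptws nat -> cantor_space}) : {ptws xi F -> cantor_space} :=
  fun x k => let b := s k.*2.+1 0 in
    match x with None => b | Some 0 => s k.*2 0 == b | Some n => s k n == b end.

Lemma codeK : cancel code decode.
Proof.
move=> f; apply/funext => -[n|]; apply/funext => k;
  rewrite /decode /code /agree /= ?odd_double ?half_double ?uphalf_double //.
by case: n => [|n] /=; case: (f (Some _) k); case: (f None k).
Qed.

Lemma decodeK : cancel decode code.
Proof.
move=> s; apply/funext => k; apply/funext => -[|n]; rewrite /code /decode /agree /=.
  case: (odd k) (odd_double_half k) => [|]; rewrite ?add1n ?add0n => -> //.
  by case: (s k 0); case: (s _ 0).
by case: (s k n.+1); case: (s _ 0).
Qed.

Lemma continuous_code : continuous code.
Proof.
apply: continuous_ptws_cantor => f k n; near=> g.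
have gNk : g None k = f None k by near: g; exact: near_ptws_bit.
have gNk2 : g None k./2 = f None k./2 by near: g; exact: near_ptws_bit.
have g0k2 : g (Some 0) k./2 = f (Some 0) k./2 by near: g; exact: near_ptws_bit.
have gnk : g (Some n) k = f (Some n) k by near: g; exact: near_ptws_bit.
by rewrite /code /agree gNk gNk2 g0k2 gnk.
Unshelve. all: by end_near.
Qed.

Lemma continuous_decode : continuous decode.
Proof.
apply: continuous_ptws_cantor => s x k.
move: (near_ptws_bit s k.*2.+1 0) (near_ptws_bit s k.*2 0).
move: (near_ptws_bit s k (odflt 0 x)).
apply: (filterS3 (nbhs_filter s)) => t tx tb t0.
by rewrite /decode tb; case: x tx => [[|n]|] /= tx; rewrite ?t0 ?tx.
Qed.

Lemma code_Cp (f : {ptws xi F -> cantor_space}) : Cp F f -> Fomega F (code f).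
Proof.
move=> /continuous_xiP Fagree k.
apply: (free_filter_finite_change (Fagree k)).
by apply: (sub_finite_set _ (finite_set1 0)) => -[|n] //; rewrite /= eqxx.
Qed.

Lemma decode_Fomega (s : {ptws nat -> cantor_space}) : Fomega F s -> Cp F (decode s).
Proof.
move=> Fs; apply/continuous_xiP => k.
apply: (free_filter_finite_change (Fs k)).
apply: (sub_finite_set _ (finite_set1 0)) => -[|n] //.
by rewrite /= /agree /decode; case: (s k n.+1); case: (s _ 0).
Qed.

End free_filter.

Theorem mainTheorem6 (F : set cantor_space) :
  free_filter F -> homeomorphic (Cp F) (Fomega F).
Proof.
move=> freeF; exists (code F), (decode F); split.
- exact: code_Cp.
- exact: decode_Fomega.
- by move=> f _; exact: codeK.
- by move=> s _; exact: decodeK.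
- by split; apply: continuous_subspaceT; [exact: continuous_code | exact: continuous_decode].
Qed.
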